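(* Let $\mathscr D:\mathscr N=\mathscr N_1\cup\cdots\cup\mathscr N_k$ be a decomposition of a chemical reaction network $\mathscr N$, let $\mathscr C_{\mathscr D}$ be its set of common complexes and $d=|\mathscr C_{\mathscr D}|$. For each $i$ let $\ell_i$ be the number of linkage classes of $\mathscr N_i$ and $h_i=|\mathscr C_i\cap\mathscr C_{\mathscr D}|$, and let $\ell$ be the number of linkage classes of $\mathscr N$. Then $\mathscr D$ is incidence independent if and only if $$\sum_{i=1}^k \ell_i-\ell=\sum_{i=1}^k h_i-d.$$
   Context: A chemical reaction network (CRN) $\mathscr N=(\mathscr S,\mathscr C,\mathscr R)$ consists of a finite set of species $\mathscr S$, a finite set of complexes $\mathscr C$ (nonnegative integer combinations of species), and a set of reactions $\mathscr R\subseteq\mathscr C\times\mathscr C$ with no reaction $(y,y)$ and every complex occurring in some reaction; it is viewed as a directed graph on $\mathscr C$. Linkage classes are the connected components of the underlying undirected graph. A decomposition $\mathscr N=\mathscr N_1\cup\cdots\cup\mathscr N_k$ is given by a partition $\{\mathscr R_1,\dots,\mathscr R_k\}$ of $\mathscr R$ (with $k\ge 2$); the subnetwork $\mathscr N_i=(\mathscr S_i,\mathscr C_i,\mathscr R_i)$ has as complex set $\mathscr C_i$ the complexes occurring in reactions of $\mathscr R_i$ and as species the species occurring in $\mathscr C_i$. The incidence map $I_a:\mathbb R^{\mathscr R}\to\mathbb R^{\mathscr C}$ sends the basis vector of a reaction $y\to y'$ to $\omega_{y'}-\omega_y$; similarly for each subnetwork (with images viewed inside $\mathbb R^{\mathscr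 C}$). The decomposition is incidence independent if $\operatorname{Im} I_a$ is the direct sum of the images of the incidence maps of the $\mathscr N_i$; since $\dim\operatorname{Im}I_a=n-\ell$ ($n$ = number of complexes), this is equivalent to $n-\ell=\sum_i(n_i-\ell_i)$. The set $\mathscr C_{\mathscr D}$ of common complexes consists of all complexes belonging to the complex sets of at least two distinct subnetworks. *)

From HB Require Import structures.
From mathcomp Require Import all_boot all_order all_algebra.
From mathcomp Require Import reals.
Set Implicit Arguments. Unset Strict Implicit. Unset Printing Implicit Defensive.
Import GRing.Theory.
Local Open Scope ring_scope.

(* A chemical reaction network: the complexes form a finite type [C]
   (the complex set), reactions a set [R] of ordered pairs (y, y'). *)
Section CRN.
Variable C : finType.

Definition is_CRN (R : {set C * C}) : Prop :=
  (forall y : C, (y, y) \notin R) /\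
  (forall y : C, exists2 r, r \in R & (r.1 == y) || (r.2 == y)).

Definition complexes (Rs : {set C * C}) : {set C} :=
  [set y : C | [exists r in Rs, (r.1 == y) || (r.2 == y)]].

Definition undirected (Rs : {set C * C}) : rel C :=
  fun x y => ((x, y) \in Rs) || ((y, x) \in Rs).

Definition nlinkage (Rs : {set C * C}) : nat :=
  n_comp (undirected Rs) (mem (complexes Rs)).

Definition ncomplexes (Rs : {set C * C}) : nat := #|complexes Rs|.

Definition is_decomposition (R : {set C * C}) (k : nat)
    (Rs : 'I_k -> {set C * C}) : Prop :=
  [/\ (2 <= k)%N,
      (forall i, Rs i != set0),
      (forall i j, i != j -> [disjoint Rs i & Rs j]) &
      \bigcup_(i < k) Rs i = R].

Definition common_complexes (k : nat) (Rs : 'I_k -> {set C * C}) : {set C} :=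
  [set y : C | [exists i : 'I_k, exists j : 'I_k,
     [&& i != j, y \in complexes (Rs i) & y \in complexes (Rs j)]]].

(* incidence map into R^C, realized as row vectors indexed by enum_rank *)
Variable F : realType.

Definition omega (y : C) : 'rV[F]_#|C| := delta_mx 0 (enum_rank y).

Definition incidence_vec (r : C * C) : 'rV[F]_#|C| := omega r.2 - omega r.1.

Definition incidence_image (Rs : {set C * C}) : {vspace 'rV[F]_#|C|} :=
  <<[seq incidence_vec r | r <- enum Rs]>>%VS.

Definition incidence_independent (R : {set C * C}) (k : nat)
    (Rs : 'I_k -> {set C * C}) : Prop :=
  incidence_image R = (\sum_(i < k) incidence_image (Rs i))%VS /\
  directv (\sum_(i < k) incidence_image (Rs i))%VS.

End CRN.

From mathcomp Require Import all_boot all_order all_algebra.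
From mathcomp Require Import reals.
From mathcomp Require Import zify.

(* For any reaction set E, the vectors w_x - w_(root x), with x ranging over
   the complexes that are not the chosen root of their linkage class, form a
   basis of the incidence image (each has coordinate 1 at x, where all the
   others vanish); hence dim Im I_E = n_E - l_E.  The image of the network is
   the sum of the images of the subnetworks, and the sum is direct iff
   n - l = sum_i (n_i - l_i).  Counting each complex with the number of
   subnetworks containing it gives sum_i n_i + d = sum_i h_i + n, which turns
   this into the stated identity. *)
Set Implicit Arguments. Unset Strict Implicit. Unset Printing Implicit Defensive.
Import GRing.Theory.
Local Open Scope ring_scope.

Section DoubleCounting.
Variables (T I : finType) (A : I -> {set T}).

Let multi := [set y | [exists i, exists j, [&& i != j, y \in A i & y \in A j]]].

Lemma card_indicator (B : {set T}) : #|B| = (\sum_y (y \in B))%N.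
Proof. by rewrite -sum1_card big_mkcond. Qed.

Lemma sum_card_multicover :
  (\sum_i #|A i| + #|multi| = \sum_i #|A i :&: multi| + #|\bigcup_i A i|)%N.
Proof.
rewrite !card_indicator.
under eq_bigr do rewrite card_indicator.
under [X in _ = (X + _)%N]eq_bigr do rewrite card_indicator.
rewrite [X in (X + _)%N]exchange_big [X in _ = (X + _)%N]exchange_big.
rewrite -!big_split /=; apply: eq_bigr => y _.
have [ym|ym] := boolP (y \in multi).
  congr (_ + _)%N; first by apply: eq_bigr => i _; rewrite inE ym andbT.
  move: ym; rewrite inE => /existsP[i /existsP[j /and3P[_ yi _]]].
  by have -> : y \in \bigcup_i A i by apply/bigcupP; exists i.
rewrite addn0 [X in _ = (X + _)%N]big1 ?add0n => [|i _]; last first.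
  by rewrite inE (negbTE ym) andbF.
have [/bigcupP[i _ yi]|ynA] := boolP (y \in \bigcup_i A i); last first.
  rewrite big1 // => i _.
  by have /negbTE-> : y \notin A i by apply: contra ynA => yi; apply/bigcupP; exists i.
rewrite (bigD1 i) //= yi big1 ?addn0 // => j ji.
have /negbTE-> // : y \notin A j; apply: contra ym => yj.
by rewrite inE; apply/existsP; exists i; apply/existsP; exists j; rewrite eq_sym ji yi.
Qed.

End DoubleCounting.

Lemma span_coord_eq0 (K : fieldType) (n : nat) (X : seq 'rV[K]_n) (j : 'I_n)
    (v : 'rV[K]_n) :
  {in X, forall x : 'rV[K]_n, x 0 j = 0} -> v \in <<X>>%VS -> v 0 j = 0.
Proof.
move=> X0 /(@coord_span _ _ _ (in_tuple X)) ->.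
rewrite summxE big1 // => i _; rewrite mxE.
by rewrite X0 ?mulr0 // mem_nth // size_tuple.
Qed.

Section Incidence.
Variables (F : realType) (C : finType).

Lemma complexes_bigcup (I : finType) (Rs : I -> {set C * C}) :
  complexes (\bigcup_i Rs i) = \bigcup_i complexes (Rs i).
Proof.
apply/setP => y; apply/idP/bigcupP => [|[i _]]; rewrite !inE.
  case/exists_inP=> r /bigcupP[i _ ri] ry.
  by exists i; rewrite // inE; apply/exists_inP; exists r.
case/exists_inP=> r ri ry; apply/exists_inP; exists r => //.
by apply/bigcupP; exists i.
Qed.

Lemma incidence_image_bigcup (I : finType) (Rs : I -> {set C * C}) :
  incidence_image F (\bigcup_i Rs i) = (\sum_i incidence_image F (Rs i))%VS.
Proof.
apply/eqP; rewrite eqEsubv; apply/andP; split.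
  apply/span_subvP => v /mapP[r]; rewrite mem_enum => /bigcupP[i _ ri] ->.
  apply: (subvP (sumv_sup i _ (subvv _))) => //.
  by apply: memv_span; apply: map_f; rewrite mem_enum.
apply/subv_sumP => i _; apply/span_subvP => v /mapP[r]; rewrite mem_enum => ri ->.
by apply: memv_span; apply: map_f; rewrite mem_enum; apply/bigcupP; exists i.
Qed.

Section Linkage.
Variable E : {set C * C}.

Let g := undirected E.
Let non_roots := [set x | ~~ roots g x].
Let root_offset (x : C) := omega F x - omega F (fingraph.root g x).

Lemma connect_sym_undirected : connect_sym g.
Proof. by apply: sym_connect_sym => x y; rewrite /g /undirected orbC. Qed.

Lemma connect_incidence_image a b :
  connect g a b -> omega F b - omega F a \in incidence_image F E.
Proof.
case/connectP=> p; elim: p a => [|c p IHp] a /=.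
  by move=> _ ->; rewrite subrr mem0v.
case/andP=> ac pc lb; rewrite -[_ - omega F a](@subrKA _ (omega F c)) addrC.
apply: memvD; last exact: IHp.
have mem_inc r : r \in E -> incidence_vec F r \in incidence_image F E.
  by move=> rE; apply: memv_span; apply: map_f; rewrite mem_enum.
by case/orP: ac => [/mem_inc //|/mem_inc]; rewrite -memvN opprB.
Qed.

Lemma incidence_image_root_offsets :
  incidence_image F E = <<[seq root_offset x | x <- enum non_roots]>>%VS.
Proof.
have offset_mem x : root_offset x \in <<[seq root_offset x | x <- enum non_roots]>>%VS.
  have [rx|nrx] := boolP (roots g x).
    by rewrite /root_offset (eqP rx) subrr mem0v.
  by apply: memv_span; apply: map_f; rewrite mem_enum inE.
apply/eqP; rewrite eqEsubv; apply/andP; split; apply/span_subvP => v /mapP[r].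
  rewrite mem_enum => rE ->; case: r rE => a b rE.
  have ab : fingraph.root g a = fingraph.root g b.
    by apply/(fingraph.rootP connect_sym_undirected)/connect1; rewrite /g /undirected rE.
  have -> : incidence_vec F (a, b) = root_offset b - root_offset a.
    by rewrite /incidence_vec /root_offset ab opprB addrA subrK.
  exact: memvB.
move=> _ ->; rewrite /root_offset -opprB memvN; apply: connect_incidence_image.
exact: connect_root.
Qed.

Lemma root_offset_coord x y :
  x \in non_roots -> root_offset y 0 (enum_rank x) = (x == y)%:R.
Proof.
rewrite inE => xnr; rewrite /root_offset !mxE eqxx /= !(inj_eq enum_rank_inj).
suff /negbTE-> : x != fingraph.root g y by rewrite subr0.
by apply: contraNneq xnr => ->; apply: (roots_root connect_sym_undirected).
Qed.

Lemma free_root_offsets : free [seq root_offset x | x <- enum non_roots].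
Proof.
have: {subset enum non_roots <= non_roots} by move=> x; rewrite mem_enum.
elim: (enum non_roots) (enum_uniq non_roots) => [|x s IHs] /=; first by rewrite nil_free.
case/andP=> xs us sub_xs.
have sub_s : {subset s <= non_roots} by move=> y ys; apply: sub_xs; rewrite inE ys orbT.
have xnr : x \in non_roots by apply: sub_xs; rewrite inE eqxx.
have offsets_x0 :
    {in [seq root_offset y | y <- s], forall z : 'rV[F]_#|C|, z 0 (enum_rank x) = 0}.
  move=> _ /mapP[y ys ->]; rewrite root_offset_coord //.
  by case: eqP ys => // <-; rewrite (negbTE xs).
rewrite free_cons IHs // andbT; apply/negP => /(span_coord_eq0 offsets_x0)/eqP.
by rewrite root_offset_coord // eqxx oner_eq0.
Qed.

Lemma non_roots_sub_complexes : non_roots \subset complexes E.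
Proof.
apply/subsetP => x; rewrite inE => xnr.
case/connectP: (connect_root g x) => [[|c p]] /=.
  by move=> _ rx; rewrite /roots rx eqxx in xnr.
case/andP=> xc _ _; rewrite inE; apply/exists_inP.
by case/orP: xc => ?; [exists (x, c) | exists (c, x)]; rewrite //= eqxx ?orbT.
Qed.

Lemma dim_incidence_image :
  (\dim (incidence_image F E) + nlinkage E = ncomplexes E)%N.
Proof.
have -> : \dim (incidence_image F E) = #|non_roots|.
  rewrite incidence_image_root_offsets (eqP free_root_offsets).
  by rewrite size_map cardE.
rewrite /nlinkage /n_comp_mem /ncomplexes -(cardID (roots g) (complexes E)) addnC.
congr (_ + _)%N; apply: eq_card => x; first by rewrite !inE andbC.
have := subsetP non_roots_sub_complexes x; rewrite !inE.
by case: (roots g x) => // ->.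
Qed.
End Linkage.
End Incidence.

Lemma eq_dim_iff_balance (dR lR n dS lS nS h d : nat) :
    (dR + lR = n)%N -> (dS + lS = nS)%N -> (nS + d = h + n)%N ->
  dR = dS <-> lS%:Z - lR%:Z = h%:Z - d%:Z.
Proof. lia. Qed.

Theorem proposition5 (F : realType) (C : finType) (R : {set C * C})
    (k : nat) (Rs : 'I_k -> {set C * C}) :
  is_CRN R -> is_decomposition R Rs ->
  incidence_independent F R Rs <->
  (Posz (\sum_(i < k) nlinkage (Rs i))%N - Posz (nlinkage R)
     = Posz (\sum_(i < k) #|complexes (Rs i) :&: common_complexes Rs|)%N
       - Posz #|common_complexes Rs|)%R.
Proof.
move=> _ [_ _ _ cover].
have image_sum : incidence_image F R = (\sum_(i < k) incidence_image F (Rs i))%VS.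
  by rewrite -cover incidence_image_bigcup.
have count : (\sum_(i < k) ncomplexes (Rs i) + #|common_complexes Rs|
    = \sum_(i < k) #|complexes (Rs i) :&: common_complexes Rs| + ncomplexes R)%N.
  by rewrite /ncomplexes -cover complexes_bigcup; apply: sum_card_multicover.
have dim_Rs : (\sum_(i < k) \dim (incidence_image F (Rs i)) + \sum_(i < k) nlinkage (Rs i)
               = \sum_(i < k) ncomplexes (Rs i))%N.
  by rewrite -big_split; apply: eq_bigr => i _; apply: dim_incidence_image.
rewrite -(eq_dim_iff_balance (dim_incidence_image F R) dim_Rs count).
rewrite /incidence_independent {1}image_sum.
split=> [[_ /directvP /= direct] | dim_eq]; first by rewrite image_sum.
by split=> //; apply/directvP; rewrite /= -image_sum dim_eq.
Qed.
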